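(* Let $\mathcal{C}$ be a Fraïssé class with Fraïssé limit $\mathbf{U}$, and let $\mathbf{T}\in\overline{\mathcal{C}}$. Then there exists a universal homogeneous retraction $r:\mathbf{U}\twoheadrightarrow\mathbf{T}$ if and only if both of the following hold: (1) for all $\mathbf{A},\mathbf{B}_1,\mathbf{B}_2\in\mathcal{C}$, embeddings $f_1:\mathbf{A}\hookrightarrow\mathbf{B}_1$, $f_2:\mathbf{A}\hookrightarrow\mathbf{B}_2$ and homomorphisms $h_1:\mathbf{B}_1\to\mathbf{T}$, $h_2:\mathbf{B}_2\to\mathbf{T}$ with $h_1\circ f_1=h_2\circ f_2$, there exist $\mathbf{C}\in\mathcal{C}$, embeddings $g_1:\mathbf{B}_1\hookrightarrow\mathbf{C}$, $g_2:\mathbf{B}_2\hookrightarrow\mathbf{C}$ with $g_1\circ f_1=g_2\circ f_2$ and a homomorphism $h:\mathbf{C}\to\mathbf{T}$ with $h\circ g_1=h_1$ and $h\circ g_2=h_2$; (2) for all $\mathbf{A},\mathbf{B}\in\mathcal{C}$, every embedding $\iota:\mathbf{A}\hookrightarrow\mathbf{B}$ and every homomorphism $h:\mathbf{A}\to\mathbf{T}$ there exists a homomorphism $\hat h:\mathbf{B}\to\mathbf{T}$ with $\hat h\circ\iota=h$.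
   Context: An embedding is an injective homomorphism reflecting all relations. An age is a class of finitely generated structures of one signature with countably many isomorphism types, closed under finitely generated substructures (up to isomorphism) and with the joint embedding property; $\overline{\mathcal{C}}$ is the class of countable structures all of whose finitely generated substructures are isomorphic to members of $\mathcal{C}$. A Fraïssé class is an age with the amalgamation property; its Fraïssé limit is the unique countable homogeneous structure with that age (homogeneous: every isomorphism between finitely generated substructures extends to an automorphism). A homomorphism $r:\mathbf{U}\to\mathbf{T}$ is a retraction if there is a homomorphism $\iota:\mathbf{T}\to\mathbf{U}$ with $r\circ\iota=1_{\mathbf{T}}$. For $\mathbf{U}\in\overline{\mathcal{C}}$, a homomorphism $u:\mathbf{U}\to\mathbf{T}$ is universal within $\overline{\mathcal{C}}$ if for all $\mathbf{A}\in\overline{\mathcal{C}}$ and homomorphisms $h:\mathbf{A}\to\mathbf{T}$ there is an embedding $\iota:\mathbf{A}\hookrightarrow\mathbf{U}$ with $h=u\circ\iota$; homogeneous if for every finitely generated $\mathbf{A}\le\mathbf{U}$ and embedding $\iota:\mathbf{A}\hookrightarrow\mathbf{U}$ with $u\circ\iota=u\restriction_A$ there is an automorphism $\alpha$ of $\mathbf{U}$ with $u\circ\alpha=u$ and $\alpha\restriction_A=\iota$. A universal homogeneous retraction $r:\mathbf{U}\twoheadrightarrow\mathbf{T}$ (with $\mathbf{T}\in\overline{\operatorname{Age}(\mathbf{U})}$) is a retraction that is a universal homogeneous homomorphism to $\mathbf{T}$ within $\overline{\operatorname{Age}(\mathbf{U})}$. *)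

From Stdlib Require Import List Fin.
Import ListNotations.

Record signature := Signature {
  fsym : Type;                 (* function symbols (constants = arity 0) *)
  fsym_ar : fsym -> nat;
  rsym : Type;
  rsym_ar : rsym -> nat }.

Record structure (S : signature) := Structure {
  carrier :> Type;
  fn : forall f : fsym S, (Fin.t (fsym_ar S f) -> carrier) -> carrier;
  rel : forall r : rsym S, (Fin.t (rsym_ar S r) -> carrier) -> Prop }.

Arguments fn {S} _ _ _.
Arguments rel {S} _ _ _.

Section Defs.
Variable S : signature.

Definition is_hom (A B : structure S) (h : A -> B) : Prop :=
  (forall f xs, h (fn A f xs) = fn B f (fun i => h (xs i))) /\
  (forall r xs, rel A r xs -> rel B r (fun i => h (xs i))).

Definition is_emb (A B : structure S) (h : A -> B) : Prop :=
  is_hom A B h /\ (forall x y, h x = h y -> x = y) /\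
  (forall r xs, rel B r (fun i => h (xs i)) -> rel A r xs).

Definition is_iso (A B : structure S) (h : A -> B) : Prop :=
  is_emb A B h /\ (forall y, exists x, h x = y).

Definition isomorphic (A B : structure S) : Prop := exists h, is_iso A B h.

Definition is_aut (A : structure S) (a : A -> A) : Prop := is_iso A A a.

Definition fin_gen (A : structure S) : Prop :=
  exists l : list A, forall P : A -> Prop,
    (forall x, In x l -> P x) ->
    (forall f xs, (forall i, P (xs i)) -> P (fn A f xs)) ->
    forall x, P x.

Definition countable (A : structure S) : Prop :=
  exists c : A -> nat, forall x y, c x = c y -> x = y.

Definition class := structure S -> Prop.

(* closure under finitely generated substructures up to isomorphism:
   a f.g. substructure of A is (up to iso) a f.g. B embedded into A *)
Definition is_age (C : class) : Prop :=
  (forall A : structure S, C A -> fin_gen A) /\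
  (exists seq : nat -> structure S,
      forall A : structure S, C A -> exists n, isomorphic A (seq n)) /\
  (forall (A B : structure S) (e : B -> A), C A -> fin_gen B -> is_emb B A e ->
      exists B', C B' /\ isomorphic B B') /\
  (forall A B : structure S, C A -> C B -> exists (D : structure S) (e1 : A -> D) (e2 : B -> D),
      C D /\ is_emb A D e1 /\ is_emb B D e2).

Definition amalgamation (C : class) : Prop :=
  forall (A B1 B2 : structure S) (f1 : A -> B1) (f2 : A -> B2),
    C A -> C B1 -> C B2 -> is_emb A B1 f1 -> is_emb A B2 f2 ->
    exists (D : structure S) (g1 : B1 -> D) (g2 : B2 -> D),
      C D /\ is_emb B1 D g1 /\ is_emb B2 D g2 /\
      (forall a, g1 (f1 a) = g2 (f2 a)).

Definition fraisse_class (C : class) : Prop := is_age C /\ amalgamation C.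

(* Age(U): f.g. structures isomorphic to a (f.g.) substructure of U,
   i.e. f.g. structures embeddable into U *)
Definition age (U : structure S) : class :=
  fun A => fin_gen A /\ exists e : A -> U, is_emb A U e.

Definition cbar (C : class) : class :=
  fun A => countable A /\
    forall (B : structure S) (e : B -> A), fin_gen B -> is_emb B A e ->
      exists B', C B' /\ isomorphic B B'.

(* homogeneity; a f.g. substructure of U is given as a f.g. B with an
   embedding e : B -> U (its image), an isomorphism between two such
   substructures as a second embedding e' : B -> U *)
Definition homogeneous (U : structure S) : Prop :=
  forall (B : structure S) (e e' : B -> U), fin_gen B ->
    is_emb B U e -> is_emb B U e' ->
    exists a : U -> U, is_aut U a /\ forall b, a (e b) = e' b.

Definition fraisse_limit (C : class) (U : structure S) : Prop :=
  countable U /\ homogeneous U /\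
  (forall A : structure S, C A -> age U A) /\
  (forall A : structure S, age U A -> exists A', C A' /\ isomorphic A A').

Definition is_retraction (U T : structure S) (r : U -> T) : Prop :=
  is_hom U T r /\ exists i : T -> U, is_hom T U i /\ forall t, r (i t) = t.

Definition universal_within (C : class) (U T : structure S) (u : U -> T) : Prop :=
  forall (A : structure S) (h : A -> T), cbar C A -> is_hom A T h ->
    exists i : A -> U, is_emb A U i /\ forall a, h a = u (i a).

(* homogeneous homomorphism: the f.g. substructure A <= U is given by an
   embedding e : A -> U, the embedding iota : A -> U by e' : A -> U;
   "u o iota = u|_A" is u (e' a) = u (e a), "alpha|_A = iota" is
   alpha (e a) = e' a *)
Definition homogeneous_hom (U T : structure S) (u : U -> T) : Prop :=
  forall (A : structure S) (e e' : A -> U), fin_gen A ->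
    is_emb A U e -> is_emb A U e' -> (forall a, u (e' a) = u (e a)) ->
    exists al : U -> U, is_aut U al /\ (forall x, u (al x) = u x) /\
      (forall a, al (e a) = e' a).

Definition univ_hom_retraction (U T : structure S) (r : U -> T) : Prop :=
  cbar (age U) T /\ is_retraction U T r /\
  universal_within (age U) U T r /\ homogeneous_hom U T r.

End Defs.

Arguments is_hom {S}. Arguments is_emb {S}. Arguments is_iso {S}.
Arguments isomorphic {S}. Arguments is_aut {S}. Arguments fin_gen {S}.
Arguments countable {S}. Arguments is_age {S}. Arguments amalgamation {S}.
Arguments fraisse_class {S}. Arguments age {S}. Arguments cbar {S}.
Arguments homogeneous {S}. Arguments fraisse_limit {S}.
Arguments is_retraction {S}. Arguments universal_within {S}.
Arguments homogeneous_hom {S}. Arguments univ_hom_retraction {S}.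

From Stdlib Require Import List Lia PeanoNat Classical ClassicalEpsilon
  ProofIrrelevance FunctionalExtensionality.
From Stdlib Require Cantor.
Import ListNotations.

(* Given a universal homogeneous retraction r : U -> T, condition
   (1) follows by copying B1, B2 into U over T (universality), moving the copy
   of A inside B2 onto the copy inside B1 with an automorphism preserving r
   (homogeneity of r) and taking the substructure generated by both copies;
   condition (2) follows by copying A into U over T and extending along a copy
   of B, using homogeneity of U.

   The key notion is the extension property of r : U -> T: an
   embedding of a finitely generated A into U extends along any A <= B of the
   age, compatibly with r and a homomorphism B -> T.  A back-and-forth argument
   shows that a homomorphism with this property is universal and homogeneous.
   A map r with the extension property is built as the union of an increasing
   chain of homomorphisms defined on finitely generated substructures of U:
   condition (2) lets us enlarge the domain by any element, condition (1)
   together with the homogeneity of U lets us solve each of the countably many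
   "tasks" that witness the extension property.

   The conditions only depend on isomorphism types, so it suffices to work
   with the age of U instead of C throughout. *)

Section Structures.
Context {S : signature}.

Lemma hom_comp (A B C : structure S) (g : A -> B) (h : B -> C) :
  is_hom A B g -> is_hom B C h -> is_hom A C (fun x => h (g x)).
Proof.
  intros [Hg1 Hg2] [Hh1 Hh2]; split.
  - intros f xs. rewrite Hg1, Hh1. reflexivity.
  - intros r xs H. apply (Hh2 r (fun i => g (xs i))), Hg2, H.
Qed.

Lemma emb_comp (A B C : structure S) (g : A -> B) (h : B -> C) :
  is_emb A B g -> is_emb B C h -> is_emb A C (fun x => h (g x)).
Proof.
  intros [Hg [Ig Rg]] [Hh [Ih Rh]]; split; [|split].
  - apply hom_comp; assumption.
  - intros x y E. apply Ig, Ih, E.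
  - intros r xs H. apply Rg, (Rh r (fun i => g (xs i))), H.
Qed.

Lemma emb_hom (A B : structure S) (g : A -> B) : is_emb A B g -> is_hom A B g.
Proof. intros [H _]; exact H. Qed.

Lemma iso_emb (A B : structure S) (h : A -> B) : is_iso A B h -> is_emb A B h.
Proof. intros [H _]; exact H. Qed.

Lemma id_iso (A : structure S) : is_iso A A (fun a => a).
Proof.
  split; [split; [split|split]|]; auto.
  intro y; exists y; reflexivity.
Qed.

Lemma iso_inverse (A B : structure S) (h : A -> B) : is_iso A B h ->
  exists h' : B -> A, is_emb B A h' /\ (forall a, h' (h a) = a) /\ (forall b, h (h' b) = b).
Proof.
  intros [[[H1 H2] [I R]] Su].
  set (h' := fun b => proj1_sig (constructive_indefinite_description _ (Su b))).
  assert (K : forall b, h (h' b) = b).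
  { intro b. unfold h'. destruct (constructive_indefinite_description _ (Su b)); auto. }
  assert (Kxs : forall n (ys : Fin.t n -> B), (fun i => h (h' (ys i))) = ys).
  { intros n ys. apply functional_extensionality. intro; apply K. }
  exists h'; split; [|split; [intro a; apply I; rewrite K; reflexivity | exact K]].
  split; [split|split].
  - intros f ys. apply I. rewrite K, H1, Kxs. reflexivity.
  - intros r ys Hr. apply R. rewrite Kxs. exact Hr.
  - intros x y E. rewrite <- (K x), <- (K y), E. reflexivity.
  - intros r ys Hr. rewrite <- Kxs. apply H2, Hr.
Qed.

Inductive gen (X : structure S) (l : list X) : X -> Prop :=
| gen_in : forall x, In x l -> gen X l x
| gen_fn : forall f xs, (forall i, gen X l (xs i)) -> gen X l (fn X f xs).

Definition Sub (X : structure S) (l : list X) : structure S :=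
  {| carrier := {x : X | gen X l x};
     fn := fun f xs => exist _ (fn X f (fun i => proj1_sig (xs i)))
                         (gen_fn X l f _ (fun i => proj2_sig (xs i)));
     rel := fun r xs => rel X r (fun i => proj1_sig (xs i)) |}.

Definition incl_sub (X : structure S) (l : list X) : Sub X l -> X := fun a => proj1_sig a.

Lemma sub_eq (X : structure S) (l : list X) (x y : Sub X l) :
  proj1_sig x = proj1_sig y -> x = y.
Proof.
  destruct x as [x p], y as [y q]; simpl; intros E; subst. f_equal. apply proof_irrelevance.
Qed.

Lemma incl_sub_emb (X : structure S) (l : list X) : is_emb (Sub X l) X (incl_sub X l).
Proof.
  split; [split|split].
  - intros f xs; reflexivity.
  - intros r xs H; exact H.
  - intros x y E; apply sub_eq, E.
  - intros r xs H; exact H.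
Qed.

Lemma gen_mono (X : structure S) (l l' : list X) :
  (forall x, In x l -> gen X l' x) -> forall x, gen X l x -> gen X l' x.
Proof. intros H x G. induction G; [apply H; auto | apply gen_fn; auto]. Qed.

Lemma gen_incl (X : structure S) (l l' : list X) :
  incl l l' -> forall x, gen X l x -> gen X l' x.
Proof. intros H. apply gen_mono. intros x Hx; apply gen_in, H, Hx. Qed.

Definition generates (A : structure S) (l : list A) : Prop :=
  forall P : A -> Prop, (forall x, In x l -> P x) ->
    (forall f xs, (forall i, P (xs i)) -> P (fn A f xs)) -> forall x, P x.

Lemma fin_gen_generates (A : structure S) : fin_gen A -> exists l, generates A l.
Proof. intros [l H]; exists l; exact H. Qed.

Lemma sub_fin_gen (X : structure S) (l : list X) : fin_gen (Sub X l).
Proof.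
  assert (E : forall l0, incl l0 l -> exists l1 : list (Sub X l),
     forall x, In x l0 -> exists p, In (exist _ x p) l1).
  { induction l0 as [|a l0 IH]; intros H.
    - exists []; intros x [].
    - destruct IH as [l1 Hl1]; [intros y Hy; apply H; right; exact Hy|].
      exists (exist _ a (gen_in X l a (H a (or_introl eq_refl))) :: l1).
      intros x [<-|Hx]; [eexists; left; reflexivity|].
      destruct (Hl1 x Hx) as [p Hp]; exists p; right; exact Hp. }
  destruct (E l (incl_refl l)) as [l1 Hl1].
  exists l1. intros P Hl Hfn [x p].
  assert (K : forall x, gen X l x -> forall p, P (exist _ x p)).
  { clear x p. intros x G. induction G as [x Hx|f xs G IH]; intros p.
    - destruct (Hl1 x Hx) as [q Hq]. rewrite (proof_irrelevance _ p q). apply Hl, Hq.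
    - specialize (Hfn f (fun i => exist _ (xs i) (G i))). simpl in Hfn.
      erewrite (proof_irrelevance _ p). apply Hfn. intro i; apply IH. }
  apply K, p.
Qed.

Lemma hom_gen_image (A X : structure S) (lA : list A) (h : A -> X) :
  generates A lA -> is_hom A X h -> forall a, gen X (map h lA) (h a).
Proof.
  intros G [H1 _]. apply G.
  - intros x Hx. apply gen_in, in_map, Hx.
  - intros f xs IH. rewrite H1. apply gen_fn. exact IH.
Qed.

Lemma hom_agree_on_gen (X Y : structure S) (l : list X) (t1 t2 : X -> Y) :
  is_hom (Sub X l) Y (fun x => t1 (incl_sub X l x)) ->
  is_hom (Sub X l) Y (fun x => t2 (incl_sub X l x)) ->
  (forall x, In x l -> t1 x = t2 x) -> forall x, gen X l x -> t1 x = t2 x.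
Proof.
  intros [H1 _] [H2 _] E x G. induction G as [x Hx|f xs G IH]; auto.
  pose (ys := fun i => exist (fun x => gen X l x) (xs i) (G i) : Sub X l).
  change (fn X f xs) with (incl_sub X l (fn (Sub X l) f ys)).
  rewrite H1, H2. f_equal. apply functional_extensionality. intro i; apply IH.
Qed.

Lemma gen_in_image (D X : structure S) (j : D -> X) (l : list X) :
  is_hom D X j -> (forall x, In x l -> exists d, j d = x) ->
  forall x, gen X l x -> exists d, j d = x.
Proof.
  intros [H1 _] E x G. induction G as [x Hx|f xs G IH]; auto.
  pose (ds := fun i => proj1_sig (constructive_indefinite_description _ (IH i))).
  exists (fn D f ds). rewrite H1. f_equal. apply functional_extensionality. intro i.
  unfold ds. destruct (constructive_indefinite_description _ (IH i)); auto.
Qed.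

Definition corestrict (A X : structure S) (l : list X) (h : A -> X)
    (H : forall a, gen X l (h a)) : A -> Sub X l :=
  fun a => exist _ (h a) (H a).

Lemma corestrict_emb (A X : structure S) (l : list X) (h : A -> X)
    (H : forall a, gen X l (h a)) :
  is_emb A X h -> is_emb A (Sub X l) (corestrict A X l h H).
Proof.
  intros [[H1 H2] [I R]]. split; [split|split].
  - intros f xs. apply sub_eq. apply H1.
  - intros r xs Hr. apply H2, Hr.
  - intros x y E. apply I. exact (f_equal (@proj1_sig _ _) E).
  - intros r xs Hr. apply R, Hr.
Qed.

Lemma sub_preimage (D X : structure S) (j : D -> X) (l : list X) :
  is_emb D X j -> (forall x, In x l -> exists d, j d = x) ->
  exists k : Sub X l -> D, is_hom (Sub X l) D k /\ forall y, j (k y) = incl_sub X l y.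
Proof.
  intros Hj Hl.
  assert (Him : forall y : Sub X l, exists d, j d = incl_sub X l y).
  { intros [y G]. apply (gen_in_image D X j l); [apply emb_hom|..]; assumption. }
  set (k := fun y => proj1_sig (constructive_indefinite_description _ (Him y))).
  assert (Ek : forall y, j (k y) = incl_sub X l y).
  { intro y. unfold k. destruct (constructive_indefinite_description _ _); assumption. }
  assert (Exs : forall n (ys : Fin.t n -> Sub X l),
             (fun i => j (k (ys i))) = fun i => incl_sub X l (ys i)).
  { intros n ys. apply functional_extensionality. intro; apply Ek. }
  destruct Hj as [[Hj1 Hj2] [Ij Rj]].
  exists k. split; [split|exact Ek].
  - intros f ys. apply Ij. rewrite Hj1, Exs, Ek. reflexivity.
  - intros R ys H. apply Rj. rewrite Exs. exact H.
Qed.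

End Structures.

Lemma fin_bound (n : nat) (g : Fin.t n -> nat) : exists K, forall i, g i <= K.
Proof.
  induction n as [|n IH].
  - exists 0. intro i. inversion i.
  - destruct (IH (fun i => g (Fin.FS i))) as [K HK].
    exists (max K (g Fin.F1)). intro i.
    apply (Fin.caseS' i (fun i => g i <= max K (g Fin.F1))); [lia|].
    intro j. specialize (HK j). lia.
Qed.

Definition injective {X Y : Type} (f : X -> Y) : Prop := forall x y, f x = f y -> x = y.

Definition decode {X : Type} (c : X -> nat) (n : nat) : option X :=
  match excluded_middle_informative (exists x, c x = n) with
  | left H => Some (proj1_sig (constructive_indefinite_description _ H))
  | right _ => None
  end.

Lemma decode_code {X : Type} (c : X -> nat) : injective c -> forall x, decode c (c x) = Some x.
Proof.
  intros Ic x. unfold decode. destruct (excluded_middle_informative _) as [H|H].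
  - destruct (constructive_indefinite_description _ H) as [y E]; simpl. f_equal. apply Ic, E.
  - exfalso; apply H; exists x; reflexivity.
Qed.

Fixpoint list_code {X : Type} (c : X -> nat) (l : list X) : nat :=
  match l with [] => 0 | a :: l' => Datatypes.S (Cantor.to_nat (c a, list_code c l')) end.

Lemma list_code_inj {X : Type} (c : X -> nat) : injective c -> injective (list_code c).
Proof.
  intros Ic l1. induction l1 as [|a l1 IH]; intros [|b l2]; cbn -[Cantor.to_nat];
    try discriminate; auto.
  intro E. apply Nat.succ_inj, Cantor.to_nat_inj in E. injection E as E1 E2.
  f_equal; [apply Ic | apply IH]; assumption.
Qed.

Fixpoint iterate {X St : Type} (c : X -> nat) (step : St -> X -> St) (s0 : St) (k : nat) : St :=
  match k with
  | 0 => s0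
  | Datatypes.S k' =>
      match decode c k' with
      | Some x => step (iterate c step s0 k') x
      | None => iterate c step s0 k'
      end
  end.

Lemma iterate_step {X St : Type} (c : X -> nat) (step : St -> X -> St) (s0 : St)
    (R : St -> St -> Prop) :
  (forall s, R s s) -> (forall s x, R s (step s x)) ->
  forall k, R (iterate c step s0 k) (iterate c step s0 (Datatypes.S k)).
Proof. intros Hrefl Hstep k. simpl. destruct (decode c k); auto. Qed.

Lemma iterate_code {X St : Type} (c : X -> nat) (step : St -> X -> St) (s0 : St) :
  injective c -> forall x,
  iterate c step s0 (Datatypes.S (c x)) = step (iterate c step s0 (c x)) x.
Proof. intros Ic x. simpl. rewrite (decode_code c Ic). reflexivity. Qed.

Section Conditions.
Context {S : signature}.

Definition hom_amalgamation (K : class S) (T : structure S) : Prop :=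
  forall (A B1 B2 : structure S) (f1 : A -> B1) (f2 : A -> B2)
        (h1 : B1 -> T) (h2 : B2 -> T),
      K A -> K B1 -> K B2 -> is_emb A B1 f1 -> is_emb A B2 f2 ->
      is_hom B1 T h1 -> is_hom B2 T h2 ->
      (forall a, h1 (f1 a) = h2 (f2 a)) ->
      exists (D : structure S) (g1 : B1 -> D) (g2 : B2 -> D) (h : D -> T),
        K D /\ is_emb B1 D g1 /\ is_emb B2 D g2 /\
        (forall a, g1 (f1 a) = g2 (f2 a)) /\ is_hom D T h /\
        (forall b, h (g1 b) = h1 b) /\ (forall b, h (g2 b) = h2 b).

Definition hom_extension (K : class S) (T : structure S) : Prop :=
  forall (A B : structure S) (i : A -> B) (h : A -> T),
      K A -> K B -> is_emb A B i -> is_hom A T h ->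
      exists hh : B -> T, is_hom B T hh /\ forall a, hh (i a) = h a.

Definition same_iso_types (K K' : class S) : Prop :=
  (forall A, K A -> exists A', K' A' /\ isomorphic A A') /\
  (forall A, K' A -> exists A', K A' /\ isomorphic A A').

Lemma same_iso_types_sym (K K' : class S) : same_iso_types K K' -> same_iso_types K' K.
Proof. intros [H1 H2]; split; assumption. Qed.

Lemma iso_comp (A B C : structure S) (g : A -> B) (h : B -> C) :
  is_iso A B g -> is_iso B C h -> is_iso A C (fun x => h (g x)).
Proof.
  intros [Hg Sg] [Hh Sh]. split; [apply emb_comp; assumption|].
  intro z. destruct (Sh z) as [y <-]. destruct (Sg y) as [x <-]. exists x; reflexivity.
Qed.

Lemma cbar_transfer (K K' : class S) (T : structure S) :
  same_iso_types K K' -> cbar K T -> cbar K' T.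
Proof.
  intros [HKK' _] [Hc HT]. split; [exact Hc|].
  intros B e FB He. destruct (HT B e FB He) as [B1 [KB1 [g Hg]]].
  destruct (HKK' B1 KB1) as [B2 [K'B2 [g' Hg']]].
  exists B2. split; [exact K'B2|]. exists (fun b => g' (g b)). apply iso_comp; assumption.
Qed.

Section Transfer.
Variables (K K' : class S) (T : structure S).
Hypothesis Hiso : same_iso_types K K'.

Lemma hom_amalgamation_transfer : hom_amalgamation K T -> hom_amalgamation K' T.
Proof.
  destruct Hiso as [HKK' HK'K].
  intros Ham A B1 B2 f1 f2 h1 h2 HA HB1 HB2 Hf1 Hf2 Hh1 Hh2 E.
  destruct (HK'K _ HA) as [A0 [KA [al Hal]]].
  destruct (HK'K _ HB1) as [B10 [KB1 [be1 Hbe1]]].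
  destruct (HK'K _ HB2) as [B20 [KB2 [be2 Hbe2]]].
  destruct (iso_inverse _ _ _ Hal) as [al' [Hal' [K1 _]]].
  destruct (iso_inverse _ _ _ Hbe1) as [be1' [Hbe1' [L1 _]]].
  destruct (iso_inverse _ _ _ Hbe2) as [be2' [Hbe2' [M1 _]]].
  apply iso_emb in Hbe1, Hbe2.
  destruct (Ham A0 B10 B20 (fun a0 => be1 (f1 (al' a0))) (fun a0 => be2 (f2 (al' a0)))
     (fun b => h1 (be1' b)) (fun b => h2 (be2' b)) KA KB1 KB2) as
     (D & g1 & g2 & h & KD & Hg1 & Hg2 & Eg & Hh & Eh1 & Eh2).
  - apply (emb_comp _ _ _ (fun a0 => f1 (al' a0))); [apply emb_comp|]; assumption.
  - apply (emb_comp _ _ _ (fun a0 => f2 (al' a0))); [apply emb_comp|]; assumption.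
  - apply hom_comp; [apply emb_hom|]; assumption.
  - apply hom_comp; [apply emb_hom|]; assumption.
  - intro a. rewrite L1, M1. apply E.
  - destruct (HKK' D KD) as [D' [K'D' [de Hde]]].
    destruct (iso_inverse _ _ _ Hde) as [de' [Hde' [N1 _]]]. apply iso_emb in Hde.
    exists D', (fun b => de (g1 (be1 b))), (fun b => de (g2 (be2 b))), (fun d => h (de' d)).
    split; [exact K'D'|].
    split; [apply (emb_comp _ _ _ (fun b => g1 (be1 b))); [apply emb_comp|]; assumption|].
    split; [apply (emb_comp _ _ _ (fun b => g2 (be2 b))); [apply emb_comp|]; assumption|].
    split; [|split; [apply hom_comp; [apply emb_hom|]; assumption | split]].
    + intro a. specialize (Eg (al a)). simpl in Eg. rewrite K1 in Eg. rewrite Eg. reflexivity.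
    + intro b. rewrite N1, Eh1, L1; reflexivity.
    + intro b. rewrite N1, Eh2, M1; reflexivity.
Qed.

Lemma hom_extension_transfer : hom_extension K T -> hom_extension K' T.
Proof.
  destruct Hiso as [_ HK'K].
  intros Hext A B i h HA HB Hi Hh.
  destruct (HK'K _ HA) as [A0 [KA [al Hal]]].
  destruct (HK'K _ HB) as [B0 [KB [be Hbe]]].
  destruct (iso_inverse _ _ _ Hal) as [al' [Hal' [K1 _]]].
  apply iso_emb in Hbe.
  destruct (Hext A0 B0 (fun a0 => be (i (al' a0))) (fun a0 => h (al' a0)) KA KB)
    as [hh [Hhh E]].
  - apply (emb_comp _ _ _ (fun a0 => i (al' a0))); [apply emb_comp|]; assumption.
  - apply hom_comp; [apply emb_hom|]; assumption.
  - exists (fun b => hh (be b)). split.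
    + apply hom_comp; [apply emb_hom|]; assumption.
    + intro a. specialize (E (al a)). simpl in E. rewrite K1 in E. exact E.
Qed.

End Transfer.

Lemma fraisse_limit_iso_types (C : class S) (U : structure S) :
  fraisse_limit C U -> same_iso_types C (age U).
Proof.
  intros (_ & _ & HCU & HUC). split; [|exact HUC].
  intros A HA. exists A. split; [apply HCU, HA | exists (fun a => a); apply id_iso].
Qed.

Lemma age_cbar (U A : structure S) : countable U -> age U A -> cbar (age U) A.
Proof.
  intros [c Ic] [FA [eA HeA]]. split.
  - exists (fun a => c (eA a)). intros x y E. apply (proj1 (proj2 HeA)), Ic, E.
  - intros B e FB He. exists B. split.
    + split; [exact FB|]. exists (fun b => eA (e b)). apply emb_comp; assumption.
    + exists (fun b => b). apply id_iso.
Qed.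

Lemma sub_age (U : structure S) (l : list U) : age U (Sub U l).
Proof. split; [apply sub_fin_gen | exists (incl_sub U l); apply incl_sub_emb]. Qed.

Lemma homogeneous_extension (U : structure S) : homogeneous U ->
  forall (A B : structure S) (e : A -> U) (f : A -> B),
  fin_gen A -> is_emb A U e -> age U B -> is_emb A B f ->
  exists g : B -> U, is_emb B U g /\ forall a, g (f a) = e a.
Proof.
  intros Hom A B e f FA He [FB [eB HeB]] Hf.
  destruct (Hom A (fun a => eB (f a)) e FA (emb_comp _ _ _ _ _ Hf HeB) He) as [a [Ha Ha2]].
  exists (fun b => a (eB b)). split; [|exact Ha2].
  apply emb_comp; [exact HeB | apply iso_emb, Ha].
Qed.

End Conditions.

Section BackAndForth.
Context {S : signature} (U T : structure S) (r : U -> T).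

Definition extension_property : Prop :=
  forall (A B : structure S) (e : A -> U) (f : A -> B) (hB : B -> T),
    fin_gen A -> is_emb A U e -> age U B -> is_emb A B f -> is_hom B T hB ->
    (forall a, hB (f a) = r (e a)) ->
    exists g : B -> U, is_emb B U g /\ (forall a, g (f a) = e a) /\ (forall b, r (g b) = hB b).

Hypothesis HEP : extension_property.

Section PartialIsomorphisms.
Context (X : structure S) (rho : X -> T).

Record piso := mk_piso {
  pdom : structure S; pdom_fg : fin_gen pdom;
  lft : pdom -> X; rgt : pdom -> U;
  lft_emb : is_emb pdom X lft; rgt_emb : is_emb pdom U rgt;
  piso_over : forall p, rho (lft p) = r (rgt p) }.

Definition piso_le (s s' : piso) : Prop :=
  forall p : pdom s, exists p' : pdom s', lft s' p' = lft s p /\ rgt s' p' = rgt s p.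

Lemma piso_le_refl s : piso_le s s.
Proof. intros p; exists p; auto. Qed.

Lemma piso_le_trans s1 s2 s3 : piso_le s1 s2 -> piso_le s2 s3 -> piso_le s1 s3.
Proof.
  intros H1 H2 p. destruct (H1 p) as [p' [E1 E2]]. destruct (H2 p') as [p'' [F1 F2]].
  exists p''. rewrite F1, F2; auto.
Qed.

Hypothesis Hrho : is_hom X T rho.
Hypothesis HX : forall l : list X, exists e, is_emb (Sub X l) U e.

Lemma piso_forth (s : piso) (x : X) : exists s', piso_le s s' /\ exists p, lft s' p = x.
Proof.
  destruct (fin_gen_generates _ (pdom_fg s)) as [lP HlP].
  set (l := map (lft s) lP ++ [x]).
  assert (Hin : forall p, gen X l (lft s p)).
  { intro p. apply (gen_incl X (map (lft s) lP)); [apply incl_appl, incl_refl|].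
    apply hom_gen_image; [exact HlP | apply emb_hom, lft_emb]. }
  set (f := corestrict (pdom s) X l (lft s) Hin).
  destruct (HEP (pdom s) (Sub X l) (rgt s) f (fun y => rho (incl_sub X l y)))
    as [g [Hg [E1 E2]]].
  - apply pdom_fg.
  - apply rgt_emb.
  - split; [apply sub_fin_gen | apply HX].
  - apply corestrict_emb, lft_emb.
  - apply hom_comp; [apply emb_hom, incl_sub_emb | exact Hrho].
  - intro a. apply piso_over.
  - assert (Hc : forall p, rho (incl_sub X l p) = r (g p)) by (intro p; rewrite E2; auto).
    exists (mk_piso (Sub X l) (sub_fin_gen X l) (incl_sub X l) g (incl_sub_emb X l) Hg Hc).
    split.
    + intro p. exists (f p). split; [reflexivity | apply E1].
    + assert (Gx : gen X l x) by (apply gen_in, in_or_app; right; left; reflexivity).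
      exists (exist _ x Gx). reflexivity.
Qed.

Definition forth (s : piso) (x : X) : piso :=
  proj1_sig (constructive_indefinite_description _ (piso_forth s x)).

Lemma forth_spec s x : piso_le s (forth s x) /\ exists p, lft (forth s x) p = x.
Proof. unfold forth. destruct (constructive_indefinite_description _ _); auto. Qed.

Section ChainLimit.
Variable sq : nat -> piso.
Hypothesis Hchain : forall k, piso_le (sq k) (sq (Datatypes.S k)).
Hypothesis Hcov : forall x, exists k p, lft (sq k) p = x.

Lemma chain_le k k' : k <= k' -> piso_le (sq k) (sq k').
Proof.
  intro Hk. induction Hk; [apply piso_le_refl | eapply piso_le_trans; eauto].
Qed.

Definition cover (x : X) : {k : nat & {p : pdom (sq k) | lft (sq k) p = x}} :=
  let (k, Hk) := constructive_indefinite_description _ (Hcov x) in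
  existT _ k (constructive_indefinite_description _ Hk).

Definition chain_map (x : X) : U := rgt (sq (projT1 (cover x))) (proj1_sig (projT2 (cover x))).

Lemma chain_map_spec x k p : lft (sq k) p = x -> chain_map x = rgt (sq k) p.
Proof.
  intros E. unfold chain_map. destruct (cover x) as [k0 [p0 E0]]. simpl.
  destruct (chain_le k0 (max k k0) ltac:(lia) p0) as [q0 [Q1 Q2]].
  destruct (chain_le k (max k k0) ltac:(lia) p) as [q [R1 R2]].
  assert (q0 = q) as ->.
  { apply (lft_emb (sq (max k k0))). rewrite Q1, R1, E, E0. reflexivity. }
  rewrite <- Q2, R2. reflexivity.
Qed.

Lemma chain_common n (xs : Fin.t n -> X) :
  exists K (q : Fin.t n -> pdom (sq K)), xs = fun i => lft (sq K) (q i).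
Proof.
  destruct (fin_bound n (fun i => projT1 (cover (xs i)))) as [K HK].
  assert (Hq : forall i, exists q : pdom (sq K), lft (sq K) q = xs i).
  { intro i. specialize (HK i). destruct (cover (xs i)) as [k [p E]]; simpl in HK.
    destruct (chain_le k K HK p) as [q [Q1 _]]. exists q. rewrite Q1; exact E. }
  exists K, (fun i => proj1_sig (constructive_indefinite_description _ (Hq i))).
  apply functional_extensionality. intro i.
  destruct (constructive_indefinite_description _ (Hq i)); auto.
Qed.

Lemma chain_map_at K (q : pdom (sq K)) : chain_map (lft (sq K) q) = rgt (sq K) q.
Proof. apply chain_map_spec; reflexivity. Qed.

(* For injectivity a pair of elements is viewed as a 2-tuple. *)
Lemma chain_map_emb : is_emb X U chain_map.
Proof.
  assert (Hmap : forall n K (q : Fin.t n -> pdom (sq K)),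
            (fun i => chain_map (lft (sq K) (q i))) = fun i => rgt (sq K) (q i)).
  { intros n K q. apply functional_extensionality. intro i. apply chain_map_at. }
  split; [split|split].
  - intros f xs. destruct (chain_common _ xs) as [K [q ->]].
    rewrite Hmap, <- (proj1 (proj1 (lft_emb (sq K)))), chain_map_at.
    apply (proj1 (proj1 (rgt_emb (sq K)))).
  - intros R xs H. destruct (chain_common _ xs) as [K [q ->]]. rewrite Hmap.
    apply (proj2 (proj1 (rgt_emb (sq K)))), (proj2 (proj2 (lft_emb (sq K)))), H.
  - intros x y E. destruct (chain_common 2 (fun i : Fin.t 2 => if Fin.eqb i (@Fin.F1 1) then x else y))
      as [K [q Hq]].
    pose proof (f_equal (fun g => g Fin.F1) Hq) as Ex.
    pose proof (f_equal (fun g => g (Fin.FS Fin.F1)) Hq) as Ey. simpl in Ex, Ey.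
    rewrite Ex, Ey in *. rewrite !chain_map_at in E.
    apply (proj1 (proj2 (rgt_emb (sq K)))) in E. rewrite E; reflexivity.
  - intros R xs H. destruct (chain_common _ xs) as [K [q ->]]. rewrite Hmap in H.
    apply (proj2 (proj1 (lft_emb (sq K)))), (proj2 (proj2 (rgt_emb (sq K)))), H.
Qed.

Lemma chain_map_over x : r (chain_map x) = rho x.
Proof.
  destruct (Hcov x) as [k [p <-]]. rewrite chain_map_at, piso_over. reflexivity.
Qed.

Lemma chain_map_onto : (forall u, exists k p, rgt (sq k) p = u) -> forall u, exists x, chain_map x = u.
Proof.
  intros Hc u. destruct (Hc u) as [k [p <-]]. exists (lft (sq k) p). apply chain_map_at.
Qed.

End ChainLimit.
End PartialIsomorphisms.
End BackAndForth.

Section UniversalHomogeneous.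
Context {S : signature} (U T : structure S) (r : U -> T).
Hypothesis Hr : is_hom U T r.
Hypothesis HEP : extension_property U T r.

(* The extension property over the substructure generated by no elements:
   every B in the age of U with a homomorphism to T embeds into U over T. *)
Lemma extension_property_base (B : structure S) (hB : B -> T) :
  age U B -> is_hom B T hB -> exists g : B -> U, is_emb B U g /\ (forall b, r (g b) = hB b).
Proof.
  intros HB Hh. destruct HB as [FB [eB HeB]].
  assert (Hagree : forall b : Sub B [], hB (incl_sub B [] b) = r (eB (incl_sub B [] b))).
  { intros [b Gb]. apply (hom_agree_on_gen B T [] hB (fun b => r (eB b))); auto.
    - apply hom_comp; [apply emb_hom, incl_sub_emb | exact Hh].
    - apply (hom_comp _ _ _ (incl_sub B []) (fun b => r (eB b)));
        [apply emb_hom, incl_sub_emb|].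
      apply hom_comp; [apply emb_hom, HeB | exact Hr].
    - intros x []. }
  destruct (HEP (Sub B []) B (fun a => eB (incl_sub B [] a)) (incl_sub B []) hB)
    as [g [Hg [_ E]]]; auto.
  - apply sub_fin_gen.
  - apply emb_comp; [apply incl_sub_emb | exact HeB].
  - split; [exact FB | exists eB; exact HeB].
  - apply incl_sub_emb.
  - exists g; auto.
Qed.

(* Universality, by a forth-only construction along an enumeration of A. *)
Theorem extension_property_universal : universal_within (age U) U T r.
Proof.
  intros A h [[c Ic] HA] Hh.
  assert (HX : forall l : list A, exists e, is_emb (Sub A l) U e).
  { intro l. destruct (HA (Sub A l) (incl_sub A l) (sub_fin_gen A l) (incl_sub_emb A l))
      as [B' [[_ [eB HeB]] [ga Hga]]].
    exists (fun x => eB (ga x)). apply emb_comp; [apply iso_emb, Hga | exact HeB]. }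
  destruct (extension_property_base (Sub A []) (fun x => h (incl_sub A [] x)))
    as [g [Hg Eg]].
  { split; [apply sub_fin_gen | apply HX]. }
  { apply (hom_comp _ _ _ (incl_sub A [])); [apply emb_hom, incl_sub_emb | exact Hh]. }
  assert (Hc : forall p, h (incl_sub A [] p) = r (g p)) by (intro; rewrite Eg; reflexivity).
  set (s0 := mk_piso U T r A h (Sub A []) (sub_fin_gen A []) (incl_sub A []) g
               (incl_sub_emb A []) Hg Hc).
  set (sq := iterate c (forth U T r HEP A h Hh HX) s0).
  assert (Hchain : forall k, piso_le U T r A h (sq k) (sq (Datatypes.S k))).
  { apply iterate_step; [apply piso_le_refl | intros s x; apply forth_spec]. }
  assert (Hcov : forall x, exists k p, lft U T r A h (sq (Datatypes.S k)) p = x).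
  { intro x. exists (c x). unfold sq. rewrite iterate_code by exact Ic. apply forth_spec. }
  assert (Hcov' : forall x, exists k p, lft U T r A h (sq k) p = x).
  { intro x. destruct (Hcov x) as [k Hk]. eauto. }
  exists (chain_map U T r A h sq Hcov'). split.
  - apply (chain_map_emb U T r A h sq Hchain).
  - intro a. symmetry. apply (chain_map_over U T r A h sq Hchain).
Qed.

Definition swap (s : piso U T r U r) : piso U T r U r :=
  mk_piso U T r U r (pdom _ _ _ _ _ s) (pdom_fg _ _ _ _ _ s) (rgt _ _ _ _ _ s) (lft _ _ _ _ _ s)
    (rgt_emb _ _ _ _ _ s) (lft_emb _ _ _ _ _ s) (fun p => eq_sym (piso_over _ _ _ _ _ s p)).

Lemma swap_le s t : piso_le U T r U r (swap s) (swap t) -> piso_le U T r U r s t.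
Proof. intros H p. destruct (H p) as [q [E1 E2]]. exists q; auto. Qed.

Lemma sub_U_emb (l : list U) : exists e, is_emb (Sub U l) U e.
Proof. exists (incl_sub U l). apply incl_sub_emb. Qed.

Definition forth_U (s : piso U T r U r) (u : U) : piso U T r U r :=
  forth U T r HEP U r Hr sub_U_emb s u.

(* One back-and-forth step: put u into the domain, then into the range. *)
Definition back_forth (s : piso U T r U r) (u : U) : piso U T r U r :=
  swap (forth_U (swap (forth_U s u)) u).

Lemma back_forth_spec s u :
  piso_le U T r U r s (back_forth s u) /\
  (exists p, lft _ _ _ _ _ (back_forth s u) p = u) /\
  (exists p, rgt _ _ _ _ _ (back_forth s u) p = u).
Proof.
  destruct (forth_spec U T r HEP U r Hr sub_U_emb s u) as [H1 [p1 Ep1]].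
  destruct (forth_spec U T r HEP U r Hr sub_U_emb (swap (forth_U s u)) u) as [H2 [p2 Ep2]].
  fold (forth_U s u) in H1, Ep1. fold (forth_U (swap (forth_U s u)) u) in H2, Ep2.
  assert (R : piso_le U T r U r (forth_U s u) (back_forth s u)) by (apply swap_le, H2).
  split; [eapply piso_le_trans; eauto | split].
  - destruct (R p1) as [q [Q1 _]]. exists q. exact (eq_trans Q1 Ep1).
  - exists p2. exact Ep2.
Qed.

Hypothesis HUc : countable U.

(* Homogeneity of r, by a back-and-forth construction along an enumeration of U. *)
Theorem extension_property_homogeneous : homogeneous_hom U T r.
Proof.
  intros A e e' FA He He' E.
  destruct HUc as [c Ic].
  set (s0 := mk_piso U T r U r A FA e e' He He' (fun a => eq_sym (E a))).
  set (sq := iterate c back_forth s0).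
  assert (Hchain : forall k, piso_le U T r U r (sq k) (sq (Datatypes.S k))).
  { apply iterate_step; [apply piso_le_refl | intros s x; apply back_forth_spec]. }
  assert (Hcov : forall u, (exists k p, lft U T r U r (sq k) p = u) /\
                           (exists k p, rgt U T r U r (sq k) p = u)).
  { intro u. destruct (back_forth_spec (sq (c u)) u) as [_ [Hl Hg]].
    assert (Hstep : sq (Datatypes.S (c u)) = back_forth (sq (c u)) u)
      by (apply (iterate_code c back_forth s0 Ic)).
    rewrite <- Hstep in Hl, Hg. split; eauto. }
  assert (Hcov' : forall u, exists k p, lft U T r U r (sq k) p = u) by apply Hcov.
  exists (chain_map U T r U r sq Hcov'). split; [split|split].
  - apply (chain_map_emb U T r U r sq Hchain).
  - apply (chain_map_onto U T r U r sq Hchain). apply Hcov.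
  - apply (chain_map_over U T r U r sq Hchain).
  - intro a. apply (chain_map_at U T r U r sq Hchain Hcov' 0).
Qed.

End UniversalHomogeneous.

Section Construction.
Context {S : signature} (U T : structure S).
Hypothesis HUc : countable U.
Hypothesis HUh : homogeneous U.
Hypothesis HTc : cbar (age U) T.
Hypothesis Ham : hom_amalgamation (age U) T.
Hypothesis Hext : hom_extension (age U) T.

(* The substructure of U generated by the constants maps to T: it is the image
   of the corresponding substructure of T under an embedding of the latter into U. *)
Lemma constants_hom : exists h0 : Sub U [] -> T, is_hom (Sub U []) T h0.
Proof.
  destruct (proj2 HTc (Sub T []) (incl_sub T []) (sub_fin_gen T []) (incl_sub_emb T []))
    as [B' [[_ [eB HeB]] [ga Hga]]].
  assert (He : is_emb (Sub T []) U (fun z => eB (ga z)))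
    by (apply emb_comp; [apply iso_emb, Hga | exact HeB]).
  destruct (sub_preimage (Sub T []) U (fun z => eB (ga z)) [] He) as [k [Hk _]].
  - intros x [].
  - exists (fun y => incl_sub T [] (k y)).
    apply hom_comp; [exact Hk | apply emb_hom, incl_sub_emb].
Qed.

(* T is inhabited as soon as U is: extend h0 to the substructure generated by u. *)
Lemma T_inhabited : U -> inhabited T.
Proof.
  intro u. destruct constants_hom as [h0 Hh0].
  assert (Hi : forall x : Sub U [], gen U [u] (incl_sub U [] x))
    by (intro x; apply (gen_incl U []); [intros y [] | exact (proj2_sig x)]).
  destruct (Hext (Sub U []) (Sub U [u]) (corestrict _ U [u] (incl_sub U []) Hi) h0)
    as [hh _]; try apply sub_age; [apply corestrict_emb, incl_sub_emb | exact Hh0|].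
  constructor. exact (hh (exist _ u (gen_in U [u] u (or_introl eq_refl)))).
Qed.

Definition default (u : U) : T := epsilon (T_inhabited u) (fun _ => True).

Definition extend_along (D : structure S) (j : D -> U) (hD : D -> T) (y : U) : T :=
  match excluded_middle_informative (exists d, j d = y) with
  | left H => hD (proj1_sig (constructive_indefinite_description _ H))
  | right _ => default y
  end.

Lemma extend_along_spec (D : structure S) (j : D -> U) (hD : D -> T) :
  is_emb D U j -> forall d, extend_along D j hD (j d) = hD d.
Proof.
  intros Hj d. unfold extend_along. destruct (excluded_middle_informative _) as [H|H].
  - destruct (constructive_indefinite_description _ H) as [d' E]. simpl.
    apply (proj1 (proj2 Hj)) in E. subst; reflexivity.
  - exfalso; apply H; eauto.
Qed.

Lemma extend_along_hom (D : structure S) (j : D -> U) (hD : D -> T) (l : list U) :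
  is_emb D U j -> is_hom D T hD -> (forall x, In x l -> exists d, j d = x) ->
  is_hom (Sub U l) T (fun y => extend_along D j hD (incl_sub U l y)).
Proof.
  intros Hj Hh Hl. destruct (sub_preimage D U j l Hj Hl) as [k [Hk Ek]].
  replace (fun y => extend_along D j hD (incl_sub U l y)) with (fun y => hD (k y)).
  - apply hom_comp; assumption.
  - apply functional_extensionality. intro y. rewrite <- Ek, extend_along_spec; auto.
Qed.

Record approx := mk_approx {
  adom : list U; amap : U -> T;
  amap_hom : is_hom (Sub U adom) T (fun y => amap (incl_sub U adom y)) }.

Definition approx_le (s s' : approx) : Prop :=
  incl (adom s) (adom s') /\ forall x, gen U (adom s) x -> amap s' x = amap s x.

Lemma approx_le_refl s : approx_le s s.
Proof. split; [apply incl_refl | reflexivity]. Qed.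

Lemma approx_le_trans s1 s2 s3 : approx_le s1 s2 -> approx_le s2 s3 -> approx_le s1 s3.
Proof.
  intros [I1 E1] [I2 E2]. split; [eapply incl_tran; eauto|].
  intros x G. rewrite E2, E1; auto. apply (gen_incl U (adom s1)); assumption.
Qed.

Lemma approx_of_hom (l : list U) (h : Sub U l -> T) : is_hom (Sub U l) T h ->
  exists s, adom s = l /\ forall y, amap s (incl_sub U l y) = h y.
Proof.
  intros Hh.
  set (m := fun x => match excluded_middle_informative (gen U l x) with
                     | left G => h (exist _ x G) | right _ => default x end).
  assert (Em : forall y, m (incl_sub U l y) = h y).
  { intros [y G]. unfold m. simpl. destruct (excluded_middle_informative _); [|contradiction].
    f_equal. apply sub_eq; reflexivity. }
  assert (Hm : is_hom (Sub U l) T (fun y => m (incl_sub U l y))).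
  { replace (fun y => m (incl_sub U l y)) with h; [exact Hh|].
    apply functional_extensionality; intro; rewrite Em; reflexivity. }
  exists (mk_approx l m Hm). split; [reflexivity | exact Em].
Qed.

Lemma approx_inhabited : inhabited approx.
Proof.
  destruct constants_hom as [h0 Hh0]. destruct (approx_of_hom [] h0 Hh0) as [s _].
  constructor; exact s.
Qed.

Lemma approx_enlarge (s : approx) (u : U) : exists s', approx_le s s' /\ In u (adom s').
Proof.
  assert (Hi : forall x : Sub U (adom s), gen U (adom s ++ [u]) (incl_sub U _ x))
    by (intro x; apply (gen_incl U (adom s));
        [apply incl_appl, incl_refl | exact (proj2_sig x)]).
  destruct (Hext (Sub U (adom s)) (Sub U (adom s ++ [u]))
              (corestrict _ U _ (incl_sub U (adom s)) Hi) (fun y => amap s (incl_sub U _ y)))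
    as [hh [Hhh Ehh]]; try apply sub_age; [apply corestrict_emb, incl_sub_emb | apply amap_hom|].
  destruct (approx_of_hom _ hh Hhh) as [s' [Edom Eh]].
  exists s'. unfold approx_le. rewrite Edom. split; [split|].
  - apply incl_appl, incl_refl.
  - intros x G. specialize (Eh (exist _ x (Hi (exist _ x G)))). simpl in Eh.
    rewrite Eh. exact (Ehh (exist _ x G)).
  - apply in_or_app. right; left; reflexivity.
Qed.

(* A task (l, m, t) asks to copy, over the current approximation s, the
   substructure generated by l ++ m (l already in the domain of s) with the
   homomorphism tau that extends s on l and sends m to t. *)
Definition task_valid (s : approx) (l m : list U) (t : list T) : Prop :=
  (forall x, In x l -> gen U (adom s) x) /\
  exists tau : U -> T, is_hom (Sub U (l ++ m)) T (fun y => tau (incl_sub U _ y)) /\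
    (forall x, gen U l x -> tau x = amap s x) /\ map tau m = t.

Definition task_solved (s s' : approx) (l m : list U) (t : list T) : Prop :=
  exists G : Sub U (l ++ m) -> U, is_emb _ U G /\
    (forall y, gen U l (incl_sub U _ y) -> G y = incl_sub U _ y) /\
    (forall y, gen U (adom s') (G y)) /\
    forall tau : U -> T, is_hom (Sub U (l ++ m)) T (fun y => tau (incl_sub U _ y)) ->
      (forall x, gen U l x -> tau x = amap s x) -> map tau m = t ->
      forall y, amap s' (G y) = tau (incl_sub U _ y).

Lemma task_witness_unique (s : approx) (l m : list U) (t : list T) (tau tau' : U -> T) :
  is_hom (Sub U (l ++ m)) T (fun y => tau (incl_sub U _ y)) ->
  is_hom (Sub U (l ++ m)) T (fun y => tau' (incl_sub U _ y)) ->
  (forall x, gen U l x -> tau x = amap s x) -> (forall x, gen U l x -> tau' x = amap s x) ->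
  map tau m = t -> map tau' m = t -> forall x, gen U (l ++ m) x -> tau x = tau' x.
Proof.
  intros Htau Htau' Etau Etau' Emap Emap'.
  apply hom_agree_on_gen; [exact Htau | exact Htau' |].
  intros x Hx. apply in_app_or in Hx. destruct Hx as [Hx|Hx].
  - rewrite Etau, Etau' by (apply gen_in, Hx). reflexivity.
  - revert x Hx. apply map_ext_in_iff. congruence.
Qed.

(* Solving a valid task: amalgamate Sub U (l ++ m) and the domain of s over
   Sub U l (condition (1)), then realise the amalgam inside U over the domain
   of s (homogeneity of U). *)
Lemma approx_solve (s : approx) (l m : list U) (t : list T) :
  task_valid s l m t -> exists s', approx_le s s' /\ task_solved s s' l m t.
Proof.
  intros [Hl [tau [Htau [Etau Emap]]]].
  assert (Hi1 : forall y : Sub U l, gen U (l ++ m) (incl_sub U l y))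
    by (intro y; apply (gen_incl U l); [apply incl_appl, incl_refl | exact (proj2_sig y)]).
  assert (Hi2 : forall y : Sub U l, gen U (adom s) (incl_sub U l y))
    by (intro y; apply (gen_mono U l); [exact Hl | exact (proj2_sig y)]).
  set (f1 := corestrict (Sub U l) U (l ++ m) (incl_sub U l) Hi1).
  set (f2 := corestrict (Sub U l) U (adom s) (incl_sub U l) Hi2).
  destruct (Ham (Sub U l) (Sub U (l ++ m)) (Sub U (adom s)) f1 f2
     (fun y => tau (incl_sub U _ y)) (fun y => amap s (incl_sub U _ y)))
    as (D & g1 & g2 & hD & HD & Hg1 & Hg2 & Eg & HhD & E1 & E2);
    try apply sub_age; try (apply corestrict_emb, incl_sub_emb); try assumption.
  { apply amap_hom. }
  { intro a. simpl. apply Etau, (proj2_sig a). }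
  destruct (homogeneous_extension U HUh (Sub U (adom s)) D (incl_sub U _) g2
              (sub_fin_gen _ _) (incl_sub_emb _ _) HD Hg2) as [j [Hj Ej]].
  destruct (fin_gen_generates _ (sub_fin_gen U (l ++ m))) as [lB HlB].
  set (L' := adom s ++ map (fun b => j (g1 b)) lB).
  assert (Hin : forall x, In x L' -> exists d, j d = x).
  { intros x Hx. apply in_app_or in Hx. destruct Hx as [Hx|Hx].
    - exists (g2 (exist _ x (gen_in U (adom s) x Hx))). apply Ej.
    - apply in_map_iff in Hx. destruct Hx as [b [Eb _]]. eauto. }
  exists (mk_approx L' (extend_along D j hD) (extend_along_hom D j hD L' Hj HhD Hin)).
  split; [split|].
  - apply incl_appl, incl_refl.
  - intros x G. simpl. transitivity (extend_along D j hD (j (g2 (exist _ x G)))).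
    + f_equal. symmetry. apply Ej.
    + rewrite extend_along_spec by exact Hj. apply E2.
  - exists (fun y => j (g1 y)). split; [apply emb_comp; assumption|split; [|split]].
    + intros y Gy.
      assert (Ey : f1 (exist _ (incl_sub U _ y) Gy) = y) by (apply sub_eq; reflexivity).
      rewrite <- Ey at 1. rewrite Eg, Ej. reflexivity.
    + intro y. simpl. apply (gen_incl U (map (fun b => j (g1 b)) lB)).
      * apply incl_appr, incl_refl.
      * apply (hom_gen_image _ _ lB (fun b => j (g1 b))); [exact HlB|].
        apply emb_hom, emb_comp; assumption.
    + intros tau' Htau' Etau' Emap' y. simpl. rewrite extend_along_spec, E1 by exact Hj.
      apply (task_witness_unique s l m t); [..| exact (proj2_sig y)]; assumption.
Qed.

Lemma approx_task (s : approx) (l m : list U) (t : list T) :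
  exists s', approx_le s s' /\ (task_valid s l m t -> task_solved s s' l m t).
Proof.
  destruct (classic (task_valid s l m t)) as [V|NV].
  - destruct (approx_solve s l m t V) as [s' [Hle Hs]]. exists s'; auto.
  - exists s. split; [apply approx_le_refl | contradiction].
Qed.

(* The construction runs through all jobs: adding an element of U to the
   domain, or solving a task; the extra number in a task job lets every task be
   attempted at arbitrarily late stages. *)
Definition job : Type := (U + nat * (list U * list U * list T))%type.

Definition job_step (s : approx) (jb : job) : approx :=
  match jb with
  | inl u => proj1_sig (constructive_indefinite_description _ (approx_enlarge s u))
  | inr (_, (l, m, t)) => proj1_sig (constructive_indefinite_description _ (approx_task s l m t))
  end.

Lemma job_step_le s jb : approx_le s (job_step s jb).
Proof.
  destruct jb as [u|[n [[l m] t]]]; simpl;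
    destruct (constructive_indefinite_description _ _) as [s' [Hle Hs]]; exact Hle.
Qed.

Definition code_U : U -> nat := proj1_sig (constructive_indefinite_description _ HUc).
Definition code_T : T -> nat := proj1_sig (constructive_indefinite_description _ (proj1 HTc)).

Lemma code_U_inj : injective code_U.
Proof. unfold code_U. destruct (constructive_indefinite_description _ _); assumption. Qed.

Lemma code_T_inj : injective code_T.
Proof. unfold code_T. destruct (constructive_indefinite_description _ _); assumption. Qed.

Definition task_code (tk : list U * list U * list T) : nat :=
  let '(l, m, t) := tk in
  Cantor.to_nat (list_code code_U l, Cantor.to_nat (list_code code_U m, list_code code_T t)).

Definition job_code (jb : job) : nat :=
  match jb with
  | inl u => Cantor.to_nat (0, code_U u)
  | inr (n, tk) => Cantor.to_nat (Datatypes.S n, task_code tk)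
  end.

Lemma task_code_inj : injective task_code.
Proof.
  pose proof (list_code_inj code_U code_U_inj) as IU.
  pose proof (list_code_inj code_T code_T_inj) as IT.
  intros [[l m] t] [[l' m'] t'] E. cbn -[Cantor.to_nat] in E.
  apply Cantor.to_nat_inj, pair_equal_spec in E as [El E].
  apply Cantor.to_nat_inj, pair_equal_spec in E as [Em Et].
  apply IU in El, Em. apply IT in Et. subst. reflexivity.
Qed.

Lemma job_code_inj : injective job_code.
Proof.
  intros [u|[n tk]] [u'|[n' tk']] E; cbn -[Cantor.to_nat] in E;
    apply Cantor.to_nat_inj, pair_equal_spec in E as [E1 E2]; try discriminate.
  - f_equal. apply code_U_inj, E2.
  - injection E1 as ->. apply task_code_inj in E2. subst. reflexivity.
Qed.

Definition stage : nat -> approx :=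
  iterate job_code job_step (epsilon approx_inhabited (fun _ => True)).

Lemma stage_le k k' : k <= k' -> approx_le (stage k) (stage k').
Proof.
  intro H. induction H; [apply approx_le_refl|]. eapply approx_le_trans; [eassumption|].
  unfold stage. apply iterate_step; [apply approx_le_refl | apply job_step_le].
Qed.

Lemma stage_step jb : stage (Datatypes.S (job_code jb)) = job_step (stage (job_code jb)) jb.
Proof. apply iterate_code, job_code_inj. Qed.

Lemma stage_dom u : In u (adom (stage (Datatypes.S (job_code (inl u))))).
Proof.
  rewrite stage_step. simpl.
  destruct (constructive_indefinite_description _ _) as [s' [Hle Hin]]. exact Hin.
Qed.

Lemma stage_task n l m t : let k := job_code (inr (n, (l, m, t))) in
  n <= k /\ (task_valid (stage k) l m t -> task_solved (stage k) (stage (Datatypes.S k)) l m t).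
Proof.
  intro k. split.
  - pose proof (Cantor.to_nat_non_decreasing (Datatypes.S n) (task_code (l, m, t))).
    unfold k, job_code. lia.
  - unfold k. rewrite stage_step. simpl.
    destruct (constructive_indefinite_description _ _) as [s' [Hle Hs]]. exact Hs.
Qed.

Lemma stage_bound (l : list U) : exists K, forall x, In x l -> In x (adom (stage K)).
Proof.
  induction l as [|a l [K HK]]; [exists 0; intros x []|].
  set (Ka := Datatypes.S (job_code (inl a))).
  exists (max K Ka). intros x [<-|Hx].
  - apply (proj1 (stage_le Ka (max K Ka) ltac:(lia))), stage_dom.
  - apply (proj1 (stage_le K (max K Ka) ltac:(lia))), HK, Hx.
Qed.

Definition retraction (y : U) : T := amap (stage (Datatypes.S (job_code (inl y)))) y.

Lemma retraction_agree k x : gen U (adom (stage k)) x -> retraction x = amap (stage k) x.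
Proof.
  intro G. unfold retraction. set (k0 := Datatypes.S (job_code (inl x))).
  destruct (stage_le k0 (max k k0) ltac:(lia)) as [_ E0].
  destruct (stage_le k (max k k0) ltac:(lia)) as [_ E1].
  rewrite <- E0, <- E1; [reflexivity | exact G | apply gen_in, stage_dom].
Qed.

Lemma stage_common n (xs : Fin.t n -> U) : exists K, forall i, gen U (adom (stage K)) (xs i).
Proof.
  destruct (fin_bound n (fun i => Datatypes.S (job_code (inl (xs i))))) as [K HK].
  exists K. intro i. apply gen_in, (proj1 (stage_le _ K (HK i))), stage_dom.
Qed.

(* A homomorphism, since finitely many arguments live in a common stage. *)
Lemma retraction_hom : is_hom U T retraction.
Proof.
  split.
  - intros f xs. destruct (stage_common _ xs) as [K HK].
    pose (ys := fun i => exist (fun x => gen U (adom (stage K)) x) (xs i) (HK i)).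
    rewrite (retraction_agree K) by (apply gen_fn; exact HK).
    change (fn U f xs) with (incl_sub U _ (fn (Sub U (adom (stage K))) f ys)).
    rewrite (proj1 (amap_hom (stage K)) f ys).
    f_equal. apply functional_extensionality; intro i. symmetry. apply retraction_agree, HK.
  - intros R xs Hr. destruct (stage_common _ xs) as [K HK].
    pose (ys := fun i => exist (fun x => gen U (adom (stage K)) x) (xs i) (HK i)).
    pose proof (proj2 (amap_hom (stage K)) R ys Hr) as E. simpl in E.
    replace (fun i => retraction (xs i)) with (fun i => amap (stage K) (xs i)); [exact E|].
    apply functional_extensionality; intro i. symmetry. apply retraction_agree, HK.
Qed.

Lemma extension_task_witness (A B : structure S) (e : A -> U) (f : A -> B) (j : B -> U)
    (hB : B -> T) (lA lB : list _) (k : nat) :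
  is_emb A U e -> is_emb B U j -> is_hom B T hB -> generates A lA ->
  (forall a, j (f a) = e a) -> (forall a, hB (f a) = retraction (e a)) ->
  (forall x, In x (map e lA) -> gen U (adom (stage k)) x) ->
  is_hom (Sub U (map e lA ++ map j lB)) T
    (fun y => extend_along B j hB (incl_sub U _ y)) /\
  (forall x, gen U (map e lA) x -> extend_along B j hB x = amap (stage k) x) /\
  map (extend_along B j hB) (map j lB) = map hB lB.
Proof.
  intros He Hj Hh HlA Ej Ecomp Hl. set (tau := extend_along B j hB).
  assert (Htau : forall b, tau (j b) = hB b) by (intro; apply extend_along_spec, Hj).
  split; [|split].
  - apply extend_along_hom; [exact Hj | exact Hh|].
    intros x Hx. apply in_app_or in Hx. destruct Hx as [Hx|Hx];
      apply in_map_iff in Hx; destruct Hx as [y [<- _]]; eauto.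
  - intros x G. destruct (gen_in_image A U e (map e lA) (emb_hom _ _ _ He)) with (x := x)
      as [a <-]; [|exact G|].
    + intros y Hy. apply in_map_iff in Hy. destruct Hy as [a [<- _]]. eauto.
    + rewrite <- (retraction_agree k), <- Ecomp, <- Ej by (apply (gen_mono U _ _ Hl), G).
      apply Htau.
  - rewrite map_map. apply map_ext. exact Htau.
Qed.

(* The retraction has the extension property: copy B into U by homogeneity,
   then use the stage at which the corresponding task is solved. *)
Theorem retraction_extension_property : extension_property U T retraction.
Proof.
  intros A B e f hB FA He HB Hf Hh Ecomp.
  destruct (homogeneous_extension U HUh A B e f FA He HB Hf) as [j [Hj Ej]].
  destruct (fin_gen_generates _ FA) as [lA HlA].
  destruct (fin_gen_generates _ (proj1 HB)) as [lB HlB].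
  set (l := map e lA). set (m := map j lB).
  destruct (stage_bound l) as [K0 HK0].
  destruct (stage_task K0 l m (map hB lB)) as [Hk Hsolve].
  set (k := job_code (inr (K0, (l, m, map hB lB)))) in *.
  assert (Hl : forall x, In x l -> gen U (adom (stage k)) x)
    by (intros x Hx; apply gen_in, (proj1 (stage_le K0 k Hk)), HK0, Hx).
  destruct (extension_task_witness A B e f j hB lA lB k He Hj Hh HlA Ej Ecomp Hl)
    as [Htau [Eagree Emap]].
  set (tau := extend_along B j hB) in *.
  destruct (Hsolve (conj Hl (ex_intro _ tau (conj Htau (conj Eagree Emap)))))
    as [G [HG [Gfix [Ggen Gcol]]]].
  assert (Hjm : forall b, gen U (l ++ m) (j b)).
  { intro b. apply (gen_incl U m); [apply incl_appr, incl_refl|].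
    apply hom_gen_image; [exact HlB | apply emb_hom, Hj]. }
  exists (fun b => G (corestrict B U (l ++ m) j Hjm b)). split; [|split].
  - apply (emb_comp _ _ _ (corestrict B U (l ++ m) j Hjm) G); [apply corestrict_emb|]; assumption.
  - intro a. rewrite Gfix; simpl; [apply Ej|].
    rewrite Ej. apply hom_gen_image; [exact HlA | apply emb_hom, He].
  - intro b. rewrite (retraction_agree (Datatypes.S k)) by apply Ggen.
    rewrite (Gcol tau Htau Eagree Emap). apply extend_along_spec, Hj.
Qed.

(* The constructed map is a universal homogeneous retraction; that it is a
   retraction follows from universality applied to the identity of T. *)
Theorem retraction_univ_hom : univ_hom_retraction U T retraction.
Proof.
  pose proof retraction_hom as Hr. pose proof retraction_extension_property as HEP.
  pose proof (extension_property_universal U T retraction Hr HEP) as Huniv.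
  split; [exact HTc | split; [split; [exact Hr|] | split; [exact Huniv|]]].
  - destruct (Huniv T (fun t => t) HTc (emb_hom _ _ _ (iso_emb _ _ _ (id_iso T))))
      as [i [Hi Ei]].
    exists i. split; [apply emb_hom, Hi | intro t; symmetry; apply Ei].
  - apply extension_property_homogeneous; assumption.
Qed.

End Construction.

Section Necessity.
Context {S : signature} (U T : structure S) (r : U -> T).
Hypothesis HUc : countable U.
Hypothesis Hr : is_hom U T r.
Hypothesis Huniv : universal_within (age U) U T r.

(* Condition (1) is necessary: copy B1 and B2 into U over T by universality,
   move the copy of A in B2 onto that in B1 by homogeneity of r, and take the
   substructure generated by both copies. *)
Lemma univ_hom_amalgamation : homogeneous_hom U T r -> hom_amalgamation (age U) T.
Proof.
  intros Hhom A B1 B2 f1 f2 h1 h2 HA HB1 HB2 Hf1 Hf2 Hh1 Hh2 E.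
  destruct (Huniv B1 h1 (age_cbar U B1 HUc HB1) Hh1) as [i1 [Hi1 Ei1]].
  destruct (Huniv B2 h2 (age_cbar U B2 HUc HB2) Hh2) as [i2 [Hi2 Ei2]].
  destruct (Hhom A (fun a => i2 (f2 a)) (fun a => i1 (f1 a)) (proj1 HA))
    as [al [Hal [Ral Eal]]]; try (apply emb_comp; assumption).
  { intro a. rewrite <- Ei1, <- Ei2. apply E. }
  assert (Hali2 : is_emb B2 U (fun b => al (i2 b)))
    by (apply emb_comp; [exact Hi2 | apply iso_emb, Hal]).
  destruct (fin_gen_generates _ (proj1 HB1)) as [l1 Hl1].
  destruct (fin_gen_generates _ (proj1 HB2)) as [l2 Hl2].
  set (l := map i1 l1 ++ map (fun b => al (i2 b)) l2).
  assert (G1 : forall b, gen U l (i1 b)).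
  { intro b. apply (gen_incl U (map i1 l1)); [apply incl_appl, incl_refl|].
    apply hom_gen_image; [exact Hl1 | apply emb_hom, Hi1]. }
  assert (G2 : forall b, gen U l (al (i2 b))).
  { intro b. apply (gen_incl U (map (fun b => al (i2 b)) l2)); [apply incl_appr, incl_refl|].
    apply (hom_gen_image _ _ l2 (fun b => al (i2 b))); [exact Hl2 | apply emb_hom, Hali2]. }
  exists (Sub U l), (corestrict B1 U l i1 G1), (corestrict B2 U l _ G2),
    (fun d => r (incl_sub U l d)).
  split; [apply sub_age|]. split; [apply corestrict_emb, Hi1|].
  split; [apply corestrict_emb, Hali2|]. split; [|split; [|split]].
  - intro a. apply sub_eq. simpl. symmetry. apply Eal.
  - apply hom_comp; [apply emb_hom, incl_sub_emb | exact Hr].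
  - intro b. simpl. symmetry. apply Ei1.
  - intro b. simpl. rewrite Ral. symmetry. apply Ei2.
Qed.

(* Condition (2) is necessary: copy A into U over T by universality, move it
   onto its copy inside a copy of B by homogeneity of U, and compose with r. *)
Lemma univ_hom_extension : homogeneous U -> hom_extension (age U) T.
Proof.
  intros HUh A B i h HA HB Hi Hh.
  destruct (Huniv A h (age_cbar U A HUc HA) Hh) as [iA [HiA EiA]].
  destruct HB as [FB [eB HeB]].
  destruct (HUh A (fun a => eB (i a)) iA (proj1 HA)) as [al [Hal Eal]];
    [apply emb_comp; assumption | exact HiA |].
  exists (fun b => r (al (eB b))). split.
  - apply (hom_comp _ _ _ (fun b => al (eB b)) r); [|exact Hr].
    apply (hom_comp _ _ _ eB al); apply emb_hom; [exact HeB | apply iso_emb, Hal].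
  - intro a. rewrite Eal. symmetry. apply EiA.
Qed.

End Necessity.

(* Main theorem. *)
Theorem theorem4p2 (S : signature) (C : structure S -> Prop)
    (U T : structure S) :
  fraisse_class C -> fraisse_limit C U -> cbar C T ->
  ((exists r : U -> T, univ_hom_retraction U T r) <->
   ((forall (A B1 B2 : structure S) (f1 : A -> B1) (f2 : A -> B2)
        (h1 : B1 -> T) (h2 : B2 -> T),
      C A -> C B1 -> C B2 -> is_emb A B1 f1 -> is_emb A B2 f2 ->
      is_hom B1 T h1 -> is_hom B2 T h2 ->
      (forall a, h1 (f1 a) = h2 (f2 a)) ->
      exists (D : structure S) (g1 : B1 -> D) (g2 : B2 -> D) (h : D -> T),
        C D /\ is_emb B1 D g1 /\ is_emb B2 D g2 /\
        (forall a, g1 (f1 a) = g2 (f2 a)) /\ is_hom D T h /\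
        (forall b, h (g1 b) = h1 b) /\ (forall b, h (g2 b) = h2 b)) /\
    (forall (A B : structure S) (i : A -> B) (h : A -> T),
      C A -> C B -> is_emb A B i -> is_hom A T h ->
      exists hh : B -> T, is_hom B T hh /\ forall a, hh (i a) = h a))).
Proof.
  intros _ HU HT.
  pose proof (fraisse_limit_iso_types C U HU) as Hiso.
  pose proof (same_iso_types_sym _ _ Hiso) as Hiso'.
  destruct HU as (HUc & HUh & _).
  split.
  - intros [r [_ [[Hr _] [Huniv Hhom]]]]. split.
    + apply (hom_amalgamation_transfer _ _ T Hiso'), (univ_hom_amalgamation U T r); assumption.
    + apply (hom_extension_transfer _ _ T Hiso'), (univ_hom_extension U T r); assumption.
  - intros [Ham Hext]. exists (retraction U T HUc HUh (cbar_transfer C (age U) T Hiso HT)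
      (hom_amalgamation_transfer _ _ T Hiso Ham) (hom_extension_transfer _ _ T Hiso Hext)).
    apply retraction_univ_hom.
Qed.
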